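(* Let $P$ be an $r$-differential poset with rank sizes $p_n$. Suppose that (a) for every $n\ge1$ and every $1\le j\le n$ one has $\Delta p_n\ge \Delta p_{n-j-\delta_{r,1}}$, and (b) for every $n\ge 0$ the matrix $DU_n+tI\in\mathbb{Z}[t]^{p_n\times p_n}$ has a Smith form over $\mathbb{Z}[t]$. Then for every $n\ge0$ the cokernel of $U_n:\mathbb{Z}^{p_n}\to\mathbb{Z}^{p_{n+1}}$ is a free abelian group (equivalently, the Smith form of $U_n$ over $\mathbb{Z}$ has only zeroes and ones on its diagonal).
   Context: For a positive integer $r$, an $r$-differential poset is a graded poset with a minimum element, all of whose intervals and rank sets are finite, such that (D1) if an element covers exactly $m$ elements then it is covered by exactly $m+r$ elements, and (D2) if two distinct elements have exactly $m$ elements that they both cover, then exactly $m$ elements cover them both. $P_n$ is the set of elements of rank $n$, $p_n:=|P_n|$, $p_k:=0$ for $k<0$, $\Delta p_n:=p_n-p_{n-1}$, and $\delta_{r,1}$ is the Kronecker delta. The up map $U_n:\mathbb{Z}^{P_n}\to\mathbb{Z}^{P_{n+1}}$ sends each basis element $x$ to the sum of the elements covering $x$; the down map $D_n:\mathbb{Z}^{P_n}\to\mathbb{Z}^{P_{n-1}}$ sends $x$ to the sum of the elements covered by $x$; $DU_n:=D_{n+1}U_n$ as a $p_n\times p_n$ integer matrix. A matrix over a commutative ring $S$ is in Smith form if it is diagonal with diagonal entries $s_1,s_2,\dots$ satisfying $s_i\mid s_{i+1}$; it has a Smith form over $S$ if it becomes one after multiplication on the left and right by invertible matrices over $S$. 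*)

From HB Require Import structures.
From mathcomp Require Import all_boot all_order all_algebra.
Set Implicit Arguments. Unset Strict Implicit. Unset Printing Implicit Defensive.
Import Order.TTheory GRing.Theory Num.Theory.
Local Open Scope ring_scope.

(* A graded poset with minimum and finite ranks is encoded by its rank sizes
   p : nat -> nat (P_n = 'I_(p n)) and its Hasse diagram
   cov n x y  <=>  y in P_(n+1) covers x in P_n. *)
Definition cover_rel (p : nat -> nat) := forall n : nat, 'I_(p n) -> 'I_(p n.+1) -> bool.

Definition ndown (p : nat -> nat) (cov : cover_rel p) (n : nat) : 'I_(p n) -> nat :=
  match n as m return 'I_(p m) -> nat with
  | 0 => fun _ => 0%N
  | m.+1 => fun x => #|[pred z : 'I_(p m) | cov m z x]|
  end.

Definition nup (p : nat -> nat) (cov : cover_rel p) (n : nat) (x : 'I_(p n)) : nat :=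
  #|[pred y : 'I_(p n.+1) | cov n x y]|.

Definition ncommon_down (p : nat -> nat) (cov : cover_rel p) (n : nat)
  : 'I_(p n) -> 'I_(p n) -> nat :=
  match n as m return 'I_(p m) -> 'I_(p m) -> nat with
  | 0 => fun _ _ => 0%N
  | m.+1 => fun x x' => #|[pred z : 'I_(p m) | cov m z x && cov m z x']|
  end.

Definition ncommon_up (p : nat -> nat) (cov : cover_rel p) (n : nat)
  (x x' : 'I_(p n)) : nat :=
  #|[pred y : 'I_(p n.+1) | cov n x y && cov n x' y]|.

Definition is_differential_poset (r : nat) (p : nat -> nat) (cov : cover_rel p) : Prop :=
  [/\ (0 < r)%N,
      p 0%N = 1%N,                                   (* unique minimum 0^ of rank 0 *)
      (forall n (y : 'I_(p n.+1)), exists x, cov n x y),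
      (forall n (x : 'I_(p n)), nup cov x = (ndown cov x + r)%N)
    & (forall n (x x' : 'I_(p n)), x != x' -> ncommon_down cov x x' = ncommon_up cov x x')
  ].

(* up map U_n : Z^{P_n} -> Z^{P_{n+1}}, as a p_{n+1} x p_n matrix acting on columns *)
Definition Umx (p : nat -> nat) (cov : cover_rel p) (n : nat) : 'M[int]_(p n.+1, p n) :=
  \matrix_(i, j) (cov n j i)%:R.

Definition Dmx (p : nat -> nat) (cov : cover_rel p) (n : nat) : 'M[int]_(p n, p n.+1) :=
  \matrix_(i, j) (cov n i j)%:R.

Definition DUmx (p : nat -> nat) (cov : cover_rel p) (n : nat) : 'M[int]_(p n) :=
  Dmx cov n *m Umx cov n.

(* p_k as an integer, with p_k = 0 for k < 0 *)
Definition pz (p : nat -> nat) (k : int) : int :=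
  match k with Posz m => (p m)%:Z | Negz _ => 0 end.

Definition Delta_p (p : nat -> nat) (k : int) : int := pz p k - pz p (k - 1).

(* genuine divisibility in a commutative ring *)
Definition rdvd (R : comPzRingType) (a b : R) : Prop := exists c : R, b = c * a.

Definition is_smith_form (R : comPzRingType) (m n : nat) (M : 'M[R]_(m, n)) : Prop :=
  (forall (i : 'I_m) (j : 'I_n), (i : nat) != j -> M i j = 0) /\
  (forall (i i' : 'I_m) (j j' : 'I_n),
      (i : nat) = j -> (i' : nat) = j' -> (i : nat).+1 = i' -> rdvd (M i j) (M i' j')).

Definition has_smith_form (R : comUnitRingType) (m n : nat) (A : 'M[R]_(m, n)) : Prop :=
  exists (L : 'M[R]_m) (Rm : 'M[R]_n),
    L \in unitmx /\ Rm \in unitmx /\ is_smith_form (L *m A *m Rm).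

(* cokernel of A : Z^n -> Z^m is free abelian: there is a surjective
   homomorphism Z^m -> Z^k whose kernel is exactly the image of A,
   i.e. Z^m / im A is isomorphic to Z^k. *)
Definition coker_free (m n : nat) (A : 'M[int]_(m, n)) : Prop :=
  exists (k : nat) (F : 'M[int]_(k, m)),
    (forall w : 'cV[int]_k, exists v : 'cV[int]_m, F *m v = w) /\
    (forall v : 'cV[int]_m, F *m v = 0 <-> exists u : 'cV[int]_n, v = A *m u).

From mathcomp Require Import all_boot all_order all_algebra all_field.
From mathcomp Require Import zify ring.
Set Implicit Arguments. Unset Strict Implicit. Unset Printing Implicit Defensive.
Import Order.TTheory GRing.Theory Num.Theory.
Local Open Scope ring_scope.

(* Axioms (D1) and (D2) say that DU_{n+1} = U_n D_n + r I, so Sylvester's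
   determinant identity gives by induction
     det (DU_n + t I) = prod_(k <= n) (t + r (k+1)) ^ (Delta p_(n-k)).
   Let S be a Smith form of DU_{n+1} + t I over Z[t]. For i < p_n, the power
   S_ii ^ (p_(n+1) - i) divides this determinant, and p_(n+1) - i exceeds
   Delta p_(n+1). By (a), every factor t + r(k+1) of multiplicity larger than
   Delta p_(n+1) is t + 2 with r = 1, so S_ii (-r) = +-1. Specialising t = -r
   yields L (U_n D_n) R = S(-r) over Z with invertible L and R and a diagonal
   S(-r) whose first p_n entries are units; hence the last p_(n+1) - p_n rows
   of L U_n vanish, and these rows of L map Z^(p_(n+1)) onto Z^(p_(n+1) - p_n)
   with kernel exactly the image of U_n. *)

Lemma sum_boolM_card k (b1 b2 : 'I_k -> bool) :
  \sum_(j : 'I_k) ((b1 j)%:R * (b2 j)%:R : int) = #|[pred j | b1 j && b2 j]|%:R.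
Proof.
rewrite -sum1_card natr_sum [RHS]big_mkcond; apply: eq_bigr => j _ /=.
by rewrite inE; case: (b1 j); case: (b2 j); rewrite ?mulr0 ?mul0r ?mulr1.
Qed.

Section DifferentialPoset.
Variables (r : nat) (p : nat -> nat) (cov : cover_rel p).
Hypothesis diffP : is_differential_poset r cov.

Lemma DUmx_entry n (i i' : 'I_(p n)) :
  DUmx cov n i i' = (ncommon_down cov i i' + (i == i') * r)%N%:R.
Proof.
case: diffP => _ _ _ D1 D2.
rewrite /DUmx !mxE; under eq_bigr do rewrite !mxE.
rewrite sum_boolM_card; have [<-|neq_ii'] := eqVneq i i'; last first.
  by rewrite mul0n addn0 D2.
have -> : #|[pred j | cov i j && cov i j]| = nup cov i.
  by apply: eq_card => j; rewrite !inE andbb.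
rewrite mul1n D1; congr (_ + _)%N%:R.
by case: n i {i'} => [|n] i //=; apply: eq_card => j; rewrite !inE andbb.
Qed.

Lemma DUmx0 : DUmx cov 0 = r%:R%:M.
Proof.
apply/matrixP => i i'; rewrite DUmx_entry !mxE /=.
by case: (i == i'); rewrite /= ?mul1n ?mul0n.
Qed.

Lemma DUmxS n : DUmx cov n.+1 = Umx cov n *m Dmx cov n + r%:R%:M.
Proof.
apply/matrixP => i i'; rewrite DUmx_entry !mxE; under eq_bigr do rewrite !mxE.
rewrite sum_boolM_card natrD /=; congr (_ + _).
by case: (i == i'); rewrite /= ?mul1n ?mul0n.
Qed.

End DifferentialPoset.

Lemma sylvester_det_scalar (R : comNzRingType) (N m : nat)
    (U : 'M[R]_(N, m)) (D : 'M[R]_(m, N)) (u : R) :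
  u ^+ N * \det (D *m U + u%:M) = u ^+ m * \det (U *m D + u%:M).
Proof.
pose X := block_mx (u%:M : 'M_N) (- U) (u *: D) (u%:M : 'M_m).
have X_lfact : X = block_mx 1%:M 0 D 1%:M *m block_mx 1%:M (- U) 0 (D *m U + u%:M)
                   *m block_mx u%:M 0 0 1%:M.
  rewrite !mulmx_block !mul1mx !mulmx1 !mul0mx !mulmx0 !add0r !addr0 !mul1mx.
  by rewrite mulmxN addrA addNr add0r /X mul_mx_scalar.
have X_rfact : X = block_mx 1%:M 0 0 u%:M *m block_mx 1%:M (- U) 0 1%:M
                   *m block_mx (U *m D + u%:M) 0 D 1%:M.
  rewrite !mulmx_block !mul1mx !mulmx1 !mul0mx !mulmx0 !add0r !addr0 !mul1mx.
  by rewrite mul0mx add0r mulNmx addrC addrA addNr add0r /X mul_scalar_mx.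
have := congr1 determinant X_lfact; rewrite X_rfact !det_mulmx.
rewrite !det_lblock !det_ublock !det1 !det_scalar !mul1r !mulr1 => E.
by rewrite mulrC -E mulrC.
Qed.

(* [drank p m] is Delta p_m as a natural number, assuming p_0 = 1. *)
Definition drank (p : nat -> nat) (m : nat) : nat :=
  if m is m'.+1 then (p m'.+1 - p m')%N else 1%N.

Lemma det_DUmx_shift (r : nat) (p : nat -> nat) (cov : cover_rel p) n (c : int) :
  is_differential_poset r cov -> (forall n, (p n <= p n.+1)%N) ->
  \det (map_mx polyC (DUmx cov n) + ('X + c%:P)%:M) =
  \prod_(k < n.+1) ('X + (c + (r * k.+1)%N%:R)%:P) ^+ drank p (n - k).
Proof.
move=> diffP p_mono; elim: n c => [|n IHn] c.
  have [_ p0 _ _ _] := diffP.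
  rewrite (DUmx0 diffP) big_ord1 /= muln1 map_scalar_mx /= -raddfD /= det_scalar p0.
  by rewrite polyCD; ring.
rewrite (DUmxS diffP) raddfD /= map_mxM map_scalar_mx /= -addrA -raddfD /= addrCA -polyCD.
set u := 'X + _.
have u_neq0 : u != 0 by rewrite -size_poly_eq0 size_XaddC.
have := sylvester_det_scalar (map_mx polyC (Umx cov n)) (map_mx polyC (Dmx cov n)) u.
rewrite -map_mxM -/(DUmx cov n).
have -> : u ^+ p n.+1 = u ^+ p n * u ^+ (p n.+1 - p n) by rewrite -exprD subnKC.
rewrite -mulrA => /mulfI; rewrite expf_neq0 // => /(_ isT) <-.
rewrite IHn [RHS]big_ord_recl /=; congr (_ * _); first by rewrite /u muln1 (addrC c).
apply: eq_bigr => k _; rewrite /bump /= add1n subSS; congr (_ ^+ _).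
congr (_ + _%:P); rewrite (addrC _ c) -addrA -natrD; congr (_ + _%:R); lia.
Qed.

Section RankGrowth.
Variables (r : nat) (p : nat -> nat).
Hypothesis p0 : p 0 = 1%N.
Hypothesis Delta_growth : forall (n j : nat), (1 <= n)%N -> (1 <= j <= n)%N ->
  Delta_p p (n%:Z - j%:Z - (r == 1%N)%:Z) <= Delta_p p n%:Z.

Lemma Delta_pS m : Delta_p p m.+1 = (p m.+1)%:Z - (p m)%:Z.
Proof. by rewrite /Delta_p (_ : m.+1%:Z - 1 = m) // -addn1 PoszD addrK. Qed.

Lemma Delta_p_lt0 (z : int) : z < 0 -> Delta_p p z = 0.
Proof. by case: z => // k _; rewrite /Delta_p /=; case: k. Qed.

Lemma rank_mono n : (p n <= p n.+1)%N.
Proof.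
have := Delta_growth (n := n.+1) (j := n.+1) isT; rewrite leqnn => /(_ isT).
rewrite subrr sub0r Delta_pS=> growth; rewrite -lez_nat -subr_ge0; apply: le_trans growth.
case: (r == 1%N) => /=; first by rewrite Delta_p_lt0.
by rewrite oppr0 /Delta_p /= subr0.
Qed.

Lemma drank_Delta m : (drank p m)%:Z = Delta_p p m.
Proof.
case: m => [|m]; first by rewrite /Delta_p /= p0 subr0.
by rewrite Delta_pS subzn // rank_mono.
Qed.

Lemma drank_le n k : (k <= n.+1)%N -> ~~ ((r == 1%N) && (k == 1%N)) ->
  (drank p (n.+1 - k) <= drank p n.+1)%N.
Proof.
case: k => [|k] le_kn not_r1k1; first by rewrite subn0.
rewrite -lez_nat !drank_Delta.
have [r1|r_neq1] := eqVneq r 1%N; last first.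
  have := Delta_growth (n := n.+1) (j := k.+1) isT.
  by rewrite (negbTE r_neq1) /= subr0 le_kn subzn //; apply.
case: k le_kn not_r1k1 => [|k] le_kn; first by rewrite r1.
have := Delta_growth (n := n.+1) (j := k.+1) isT.
rewrite r1 eqxx /= ltnW //= => /(_ isT).
by rewrite (_ : (n.+1)%:Z - (k.+1)%:Z - 1 = (n.+1 - k.+2)%N%:Z) //; lia.
Qed.

End RankGrowth.

Lemma mup_prod_XsubC_pow (F : fieldType) (K : nat) (b : 'I_K -> F) (e : 'I_K -> nat) (z : F) :
  mup z (\prod_(i < K) ('X - (b i)%:P) ^+ e i) = (\sum_(i < K) (b i == z) * e i)%N.
Proof.
elim: K b e => [|K IHK] b e; first by rewrite !big_ord0 mupNroot // root1.
rewrite big_ord_recr /= mupM; last 2 first.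
- by rewrite prodf_seq_neq0; apply/allP => i _; rewrite expf_neq0 // polyXsubC_eq0.
- by rewrite expf_neq0 // polyXsubC_eq0.
rewrite IHK big_ord_recr /= mup_XsubCX; congr (_ + _)%N.
by case: (b ord_max == z); rewrite ?mul1n ?mul0n.
Qed.

Lemma root_pow_dvd_prod_XsubC (F : fieldType) (K k : nat) (b : 'I_K -> F)
    (e : 'I_K -> nat) (G q : {poly F}) (z : F) :
  injective b -> (0 < k)%N -> G ^+ k * q = \prod_(i < K) ('X - (b i)%:P) ^+ e i ->
  root G z -> exists2 i, b i = z & (k <= e i)%N.
Proof.
move=> b_inj k_gt0 Efact Gz.
have : G ^+ k * q != 0.
  by rewrite Efact prodf_seq_neq0; apply/allP => i _; rewrite expf_neq0 // polyXsubC_eq0.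
rewrite mulf_eq0 negb_or => /andP[Gk_neq0 q_neq0].
have k_le_mup : (k <= mup z (G ^+ k * q))%N.
  rewrite mupM //; apply: leq_trans (leq_addr (mup z q) _).
  by rewrite mup_geq //; apply: dvdp_exp2r; rewrite dvdp_XsubCl.
rewrite Efact mup_prod_XsubC_pow in k_le_mup.
have [i /eqP bi_z | no_i] := pickP (fun i => b i == z); last first.
  move: k_le_mup; rewrite big1 => [|j _]; last by rewrite no_i.
  by rewrite leqn0 => /eqP k0; rewrite k0 in k_gt0.
exists i => //; move: k_le_mup; rewrite (bigD1 i) //= bi_z eqxx mul1n big1 ?addn0 // => j neq_ji.
by rewrite -bi_z (inj_eq b_inj) (negbTE neq_ji).
Qed.

(* The roots of g are found in the algebraic closure; each must be one of the
   [- a i] of multiplicity larger than D, where x0 - root = 1. *)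
Lemma horner_unit_of_pow_dvd (K D k : nat) (a : 'I_K -> int) (e : 'I_K -> nat)
    (x0 : int) (g q : {poly int}) :
  injective a -> (D < k)%N -> (forall i, (D < e i)%N -> x0 + a i = 1) ->
  g ^+ k * q = \prod_(i < K) ('X + (a i)%:P) ^+ e i ->
  g.[x0] \is a GRing.unit.
Proof.
move=> a_inj lt_Dk a_good Efact.
have lead_unit : lead_coef g \is a GRing.unit.
  have monic_prod : \prod_(i < K) ('X + (a i)%:P) ^+ e i \is monic.
    by apply: monic_prod => i _; apply/monic_exp/monicXaddC.
  have : lead_coef g ^+ k \is a GRing.unit.
    apply/unitrPr; exists (lead_coef q).
    by rewrite -lead_coef_exp -lead_coefM Efact (monicP monic_prod).
  by rewrite unitrX_pos // (leq_ltn_trans _ lt_Dk).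
have lead_neq0 : lead_coef g != 0 by apply: contraTneq lead_unit => ->; rewrite unitr0.
pose f := (intr : int -> algC).
have f_inj : injective f by apply: intr_inj.
pose G := map_poly f g.
have lead_G : lead_coef G = f (lead_coef g) by rewrite lead_coef_map_inj.
have G_neq0 : G != 0 by rewrite -lead_coef_eq0 lead_G intr_eq0.
have EG : G ^+ k * map_poly f q = \prod_(i < K) ('X - (- f (a i))%:P) ^+ e i.
  rewrite -rmorphXn -rmorphM Efact rmorph_prod; apply: eq_bigr => i _.
  by rewrite rmorphXn /= map_polyXaddC polyCN opprK.
have root_G z : root G z -> f x0 - z = 1.
  have b_inj : injective (fun i => - f (a i)) by move=> i j /oppr_inj /f_inj /a_inj.
  move=> Gz; have k_gt0 : (0 < k)%N := leq_ltn_trans (leq0n D) lt_Dk.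
  have [i ai_z lt_ke] := root_pow_dvd_prod_XsubC b_inj k_gt0 EG Gz.
  by rewrite -ai_z opprK -rmorphD /= a_good ?(leq_trans lt_Dk) // rmorph1.
have [s Es] := closed_field_poly_normal G.
have : G.[f x0] = f (lead_coef g).
  rewrite {1}Es hornerZ horner_prod big1_seq ?mulr1 // => z zs.
  by rewrite hornerXsubC root_G // Es rootZ ?lead_coef_eq0 // root_prod_XsubC.
by rewrite horner_map => /f_inj ->.
Qed.

Lemma rdvd_trans (R : comPzRingType) (a b c : R) : rdvd a b -> rdvd b c -> rdvd a c.
Proof. by move=> [x ->] [y ->]; exists (y * x); rewrite mulrA. Qed.

Lemma smith_diag_dvd (R : comPzRingType) N (S : 'M[R]_N) (i j : 'I_N) :
  is_smith_form S -> (i <= j)%N -> rdvd (S i i) (S j j).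
Proof.
move=> [_ S_dvd]; have rdvd_refl k : rdvd (S k k) (S k k) by exists 1; rewrite mul1r.
case: j => j lt_jN /=; elim: j lt_jN => [|j IHj] lt_jN.
  rewrite leqn0 => /eqP i0; suff -> : i = Ordinal lt_jN by [].
  exact: val_inj.
rewrite leq_eqVlt => /predU1P[i_j|lt_ij].
  suff -> : i = Ordinal lt_jN by [].
  exact: val_inj.
by apply: rdvd_trans (IHj (ltnW lt_jN) lt_ij) _; apply: S_dvd.
Qed.

Lemma det_smith (R : comPzRingType) N (S : 'M[R]_N) :
  is_smith_form S -> \det S = \prod_i S i i.
Proof.
move=> [S_diag _]; have S_def : S = diag_mx (\row_i S i i).
  apply/matrixP => i j; rewrite !mxE; have [<-|neq_ij] := eqVneq i j.
    by rewrite mulr1n.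
  by rewrite mulr0n S_diag.
by rewrite {1}S_def det_diag; apply: eq_bigr => i _; rewrite mxE.
Qed.

Lemma card_ord_geq N i : (i <= N)%N -> #|[pred j : 'I_N | ~~ (j < i)%N]| = (N - i)%N.
Proof.
move=> le_iN; rewrite -sum1_card (big_mkcond (fun j : 'I_N => j \in _)) /=.
rewrite -(big_mkord xpredT (fun j => if ~~ (j < i)%N then 1%N else 0%N)).
rewrite (big_cat_nat (n := i)) //= big1_seq ?add0n; last first.
  by move=> j /=; rewrite mem_index_iota => /andP[_ ->].
rewrite (eq_big_nat _ _ (F2 := fun _ => 1%N)); last first.
  by move=> j /andP[le_ij _]; rewrite -leqNgt le_ij.
by rewrite sum_nat_const_nat muln1.
Qed.

Lemma smith_diag_pow_dvd_det (R : comPzRingType) N (S : 'M[R]_N) (i : 'I_N) :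
  is_smith_form S -> rdvd (S i i ^+ (N - i)) (\det S).
Proof.
move=> S_smith; rewrite det_smith // (bigID (fun j : 'I_N => (j < i)%N)) /=.
have S_dvd (j : 'I_N) : exists c, ~~ (j < i)%N -> S j j = c * S i i.
  case: (boolP (j < i)%N) => [_|]; first by exists 0.
  by rewrite -leqNgt => /(smith_diag_dvd S_smith) [c ->]; exists c.
have [f Sf] := fin_all_exists S_dvd.
rewrite [X in _ * X](eq_bigr (fun j => f j * S i i)) // big_split /= prodr_const.
rewrite card_ord_geq; last exact: ltnW.
by exists ((\prod_(j < N | (j < i)%N) S j j) * \prod_(j < N | ~~ (j < i)%N) f j); ring.
Qed.

Section DiagonalFactorisation.
Variables (R : comUnitRingType) (m n : nat) (W : 'M[R]_(m, n)) (V : 'M[R]_(n, m)).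
Hypothesis le_nm : (n <= m)%N.
Hypothesis WV_diag : forall a b : 'I_m, a != b -> (W *m V) a b = 0.
Hypothesis WV_unit : forall a : 'I_m, (a < n)%N -> (W *m V) a a \is a GRing.unit.

Let io := widen_ord le_nm.

Lemma colsub_factor_unitmx : colsub io V \in unitmx.
Proof.
have : \det (mxsub io io (W *m V)) \is a GRing.unit.
  have -> : mxsub io io (W *m V) = diag_mx (\row_a (W *m V) (io a) (io a)).
    apply/matrixP => a b; rewrite [LHS]mxE [RHS]mxE [X in X *+ _]mxE.
    have [<-|neq_ab] := eqVneq a b; first by rewrite mulr1n.
    by rewrite mulr0n WV_diag.
  rewrite det_diag; apply/unitr_prod => a _; rewrite mxE; apply: WV_unit.
  by rewrite /= ltn_ord.
by rewrite mxsub_mul det_mulmx unitrM unitmxE => /andP[_ ->].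
Qed.

Lemma factor_entry_eq0 (j : 'I_m) (c : 'I_n) : (n <= j)%N -> W j c = 0.
Proof.
move=> le_nj; have : row j W *m colsub io V = 0.
  rewrite mulmx_colsub -row_mul; apply/rowP => b; rewrite mxE [in LHS]mxE WV_diag ?mxE //.
  by apply/eqP => j_b; move: le_nj; rewrite j_b /= leqNgt ltn_ord.
move/(congr1 (mulmx^~ (invmx (colsub io V)))).
rewrite mulmxK ?colsub_factor_unitmx // mul0mx.
by move/matrixP/(_ 0 c); rewrite !mxE.
Qed.

Lemma factor_solve (w : 'cV[R]_m) : (forall b : 'I_m, (n <= b)%N -> w b 0 = 0) ->
  exists x, W *m V *m x = w.
Proof.
move=> w_low; exists (\col_b (if (b < n)%N then ((W *m V) b b)^-1 * w b 0 else 0)).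
apply/matrixP => b z; rewrite (ord1 z) !mxE (bigD1 b) //= big1 ?addr0; last first.
  by move=> c neq_cb; rewrite WV_diag ?mul0r // eq_sym.
rewrite mxE; case: ifP => lt_bn; first by rewrite mulrA mulrV ?mul1r ?WV_unit.
by rewrite mulr0 w_low // leqNgt lt_bn.
Qed.

End DiagonalFactorisation.

(* The rows of L of index >= n present the cokernel of U. *)
Lemma coker_free_of_diag_factor m n (L : 'M[int]_m) (U : 'M[int]_(m, n))
    (V : 'M[int]_(n, m)) :
  (n <= m)%N -> L \in unitmx ->
  (forall a b : 'I_m, a != b -> (L *m U *m V) a b = 0) ->
  (forall a : 'I_m, (a < n)%N -> (L *m U *m V) a a \is a GRing.unit) ->
  coker_free U.
Proof.
move=> le_nm L_unit LUV_diag LUV_unit.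
have lt_shift (a : 'I_(m - n)) : (a + n < m)%N by have := ltn_ord a; lia.
pose sh a := Ordinal (lt_shift a).
have sh_inj : injective sh by move=> a b /(congr1 val) /= /addIn; apply: val_inj.
exists (m - n)%N, (rowsub sh L); split.
  move=> w; exists (invmx L *m colsub sh 1%:M *m w).
  rewrite !mulmxA mul_rowsub_mx mulmxV // -mxsub_mul mul1mx.
  have -> : mxsub sh sh (1%:M : 'M[int]_m) = 1%:M.
    by apply/matrixP => a b; rewrite !mxE (inj_eq sh_inj).
  by rewrite mul1mx.
have FU : rowsub sh L *m U = 0.
  apply/matrixP => a c; rewrite mul_rowsub_mx [LHS]mxE [RHS]mxE.
  by rewrite (factor_entry_eq0 le_nm LUV_diag LUV_unit) //= leq_addl.
move=> v; split=> [Fv|[u ->]]; last by rewrite mulmxA FU mul0mx.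
have Lv_low (b : 'I_m) : (n <= b)%N -> (L *m v) b 0 = 0.
  move=> le_nb; have lt_b : (b - n < m - n)%N by have := ltn_ord b; lia.
  move/matrixP: Fv => /(_ (Ordinal lt_b) 0); rewrite mul_rowsub_mx !mxE.
  by rewrite (_ : sh _ = b) //; apply: val_inj; rewrite /= subnK.
have [x LUVx] := factor_solve LUV_diag LUV_unit Lv_low.
exists (V *m x); apply: (can_inj (mulKmx L_unit)).
by rewrite -LUVx !mulmxA.
Qed.

Lemma horner_DUmxS_shift (r : nat) (p : nat -> nat) (cov : cover_rel p) n :
  is_differential_poset r cov ->
  map_mx (horner_eval (- r%:Z)) (map_mx polyC (DUmx cov n.+1) + 'X%:M) =
  Umx cov n *m Dmx cov n.
Proof.
move=> diffP; rewrite map_mxD map_scalar_mx /= horner_evalE hornerX (DUmxS diffP).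
set UD := Umx cov n *m Dmx cov n.
have -> : map_mx (horner_eval (- r%:Z)) (map_mx polyC (UD + r%:R%:M)) = UD + r%:R%:M.
  by apply/matrixP => a b; rewrite !mxE horner_evalE hornerC.
by rewrite -addrA -raddfD /= natz subrr raddf0 addr0.
Qed.

Section SmithFormAtMinusR.
Variables (r : nat) (p : nat -> nat) (cov : cover_rel p).
Hypothesis diffP : is_differential_poset r cov.
Hypothesis Delta_growth : forall (n j : nat), (1 <= n)%N -> (1 <= j <= n)%N ->
  Delta_p p (n%:Z - j%:Z - (r == 1%N)%:Z) <= Delta_p p n%:Z.

Lemma horner_smith_diag_unit n (L R : 'M[{poly int}]_(p n.+1)) (i : 'I_(p n.+1)) :
  L \in unitmx -> R \in unitmx ->
  is_smith_form (L *m (map_mx polyC (DUmx cov n.+1) + 'X%:M) *m R) -> (i < p n)%N ->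
  ((L *m (map_mx polyC (DUmx cov n.+1) + 'X%:M) *m R) i i).[- r%:Z] \is a GRing.unit.
Proof.
set M := _ + _; set S := L *m M *m R => L_unit R_unit S_smith lt_ipn.
have [r_gt0 p0 _ _ _] := diffP.
have p_mono := rank_mono Delta_growth.
have det_M : \det M = \prod_(k < n.+2) ('X + ((r * k.+1)%N%:R)%:P) ^+ drank p (n.+1 - k).
  have := det_DUmx_shift n.+1 0 diffP p_mono; rewrite polyC0 addr0 => ->.
  by apply: eq_bigr => k _; rewrite add0r.
have LR_unit : \det L * \det R \is a GRing.unit by rewrite unitrM -!unitmxE L_unit R_unit.
have [c det_S] := smith_diag_pow_dvd_det i S_smith.
apply: (horner_unit_of_pow_dvd (D := drank p n.+1) (k := (p n.+1 - i)%N)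
  (a := fun k : 'I_n.+2 => (r * k.+1)%N%:R) (e := fun k : 'I_n.+2 => drank p (n.+1 - k))
  (q := (\det L * \det R)^-1 * c)).
- move=> k k' /eqP; rewrite eqr_nat eqn_mul2l (negbTE (lt0n_neq0 r_gt0)) /=.
  by move=> /eqP [k_k']; apply: val_inj.
- by have := p_mono n; have := ltn_ord i; rewrite /drank; lia.
- move=> k lt_drank; have /andP[/eqP r1 /eqP k1] : (r == 1%N) && (k == 1%N :> nat).
    apply: contraTT lt_drank => not_r1k1; rewrite -leqNgt.
    by apply: (drank_le p0 Delta_growth); rewrite // -ltnS ltn_ord.
  by rewrite r1 k1.
- by rewrite -det_M mulrCA [_ ^+ _ * c]mulrC -det_S /S !det_mulmx mulrAC mulKr.
Qed.

End SmithFormAtMinusR.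

Theorem proposition2p5 (r : nat) (p : nat -> nat) (cov : cover_rel p) :
  is_differential_poset r cov ->
  (forall (n j : nat), (1 <= n)%N -> (1 <= j <= n)%N ->
     Delta_p p (n%:Z - j%:Z - (r == 1%N)%:Z) <= Delta_p p n%:Z) ->
  (forall n : nat,
     has_smith_form (map_mx polyC (DUmx cov n) + 'X%:M : 'M[{poly int}]_(p n))) ->
  forall n : nat, coker_free (Umx cov n).
Proof.
move=> diffP Delta_growth smith n.
have [L [R [L_unit [R_unit S_smith]]]] := smith n.+1.
set S := L *m _ *m R in S_smith; have S_diag := proj1 S_smith.
pose ev := horner_eval (- r%:Z).
have ev_S : map_mx ev S = map_mx ev L *m Umx cov n *m (Dmx cov n *m map_mx ev R).
  by rewrite 2!map_mxM /ev horner_DUmxS_shift // !mulmxA.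
apply: (coker_free_of_diag_factor (L := map_mx ev L) (V := Dmx cov n *m map_mx ev R)).
- exact: rank_mono Delta_growth n.
- by rewrite /ev unitmxE det_map_mx rmorph_unit // -unitmxE.
- by move=> a b neq_ab; rewrite -ev_S mxE /ev horner_evalE S_diag // horner0.
- move=> a lt_an; rewrite -ev_S mxE /ev horner_evalE.
  by apply: (horner_smith_diag_unit diffP Delta_growth).
Qed.
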